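(* Let $b:\mathbb R^n\to\mathbb R^n$ be locally Lipschitz continuous and suppose there are $R\ge0$, $\kappa>0$ with $\langle b(x)-b(y),x-y\rangle\le-\kappa|x-y|^2$ for all $x,y\in\mathbb R^n\setminus B_R$. Then for any $\bar\kappa\in(0,\kappa)$ there is $\bar R>0$ such that $\langle b(x)-b(y),x-y\rangle\le-\bar\kappa|x-y|^2$ for all $y\in\mathbb R^n$ and all $|x|>\bar R$.
   Context: $B_R$ denotes the closed (or open) ball of radius $R$ about the origin in $\mathbb R^n$. *)

From HB Require Import structures.
From mathcomp Require Import all_boot all_order all_algebra.
From mathcomp Require Import reals.
Set Implicit Arguments. Unset Strict Implicit. Unset Printing Implicit Defensive.
Import Order.TTheory GRing.Theory Num.Theory.
Local Open Scope ring_scope.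

Definition dotv (R : realType) (n : nat) (x y : 'rV[R]_n) : R :=
  \sum_(i < n) x 0 i * y 0 i.

Definition enorm (R : realType) (n : nat) (x : 'rV[R]_n) : R :=
  Num.sqrt (dotv x x).

Definition locally_lipschitz (R : realType) (n : nat) (b : 'rV[R]_n -> 'rV[R]_n) : Prop :=
  forall x : 'rV[R]_n, exists r : R, exists L : R, 0 < r /\ 0 <= L /\
    forall y z : 'rV[R]_n, enorm (y - x) < r -> enorm (z - x) < r ->
      enorm (b y - b z) <= L * enorm (y - z).

From HB Require Import structures.
From mathcomp Require Import all_boot all_order all_algebra.
From mathcomp Require Import reals.
From mathcomp Require Import all_classical all_analysis.
From mathcomp Require Import lra.
Import Order.TTheory GRing.Theory Num.Theory.
Import numFieldNormedType.Exports.
Local Open Scope classical_set_scope.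
Local Open Scope ring_scope.

(* Write v = x - y and d = |v|.  If |y| > R0 the hypothesis applies directly.
   Otherwise push y back along the line through x and y to the point
   w = y - t v with R0 < |w| <= 3 R0 + 1.  Since x - w = (1 + t) v, the
   hypothesis between x and w gives <b x - b w, v> <= - kappa d^2, while
   <b w - b y, v> <= 2 M d, where M bounds |b| on the ball of radius 3 R0 + 1
   (finite by continuity and compactness).  For |x| large, d is large, and
   2 M d <= (kappa - kbar) d^2. *)

Section EuclideanGeometry.
Context {R : realType} {n : nat}.
Implicit Types (x y z : 'rV[R]_n) (a : R).

Lemma dotvC x y : dotv x y = dotv y x.
Proof. by apply: eq_bigr => i _; rewrite mulrC. Qed.

Lemma dotvDl x y z : dotv (x + y) z = dotv x z + dotv y z.
Proof. by rewrite /dotv -big_split; apply: eq_bigr => i _; rewrite mxE mulrDl. Qed.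

Lemma dotvZl a x y : dotv (a *: x) y = a * dotv x y.
Proof. by rewrite /dotv mulr_sumr; apply: eq_bigr => i _; rewrite mxE mulrA. Qed.

Lemma dotvBl x y z : dotv (x - y) z = dotv x z - dotv y z.
Proof. by rewrite dotvDl -scaleN1r dotvZl mulN1r. Qed.

Lemma dotvZr a x y : dotv y (a *: x) = a * dotv y x.
Proof. by rewrite dotvC dotvZl dotvC. Qed.

Lemma dotvDr x y z : dotv z (x + y) = dotv z x + dotv z y.
Proof. by rewrite dotvC dotvDl !(dotvC z). Qed.

Lemma dotvBr x y z : dotv z (x - y) = dotv z x - dotv z y.
Proof. by rewrite dotvC dotvBl !(dotvC z). Qed.

Lemma dotv0l y : dotv 0 y = 0.
Proof. by rewrite -(scale0r 0) dotvZl mul0r. Qed.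

Lemma dotvv_ge0 x : 0 <= dotv x x.
Proof. by apply: sumr_ge0 => i _; rewrite -expr2 sqr_ge0. Qed.

Lemma dotvv_eq0 x : dotv x x = 0 -> x = 0.
Proof.
move=> /eqP; rewrite psumr_eq0 => [/allP x0|i _]; last by rewrite -expr2 sqr_ge0.
apply/matrixP => i j; rewrite (ord1 i) mxE.
by have := x0 j (mem_index_enum j); rewrite mulf_eq0 orbb => /eqP.
Qed.

Lemma enorm_ge0 x : 0 <= enorm x.
Proof. exact: sqrtr_ge0. Qed.

Lemma enorm_sqr x : enorm x ^+ 2 = dotv x x.
Proof. by rewrite sqr_sqrtr // dotvv_ge0. Qed.

Lemma enorm0 : enorm (0 : 'rV[R]_n) = 0.
Proof. by rewrite /enorm dotv0l sqrtr0. Qed.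

Lemma enorm_eq0 x : enorm x = 0 -> x = 0.
Proof.
move=> /eqP; rewrite sqrtr_eq0 => vv_le0.
by apply: dotvv_eq0; apply/le_anti; rewrite vv_le0 dotvv_ge0.
Qed.

Lemma enormZ a x : enorm (a *: x) = `|a| * enorm x.
Proof. by rewrite /enorm dotvZl dotvZr mulrA -expr2 sqrtrM ?sqr_ge0 // sqrtr_sqr. Qed.

Lemma enormN x : enorm (- x) = enorm x.
Proof. by rewrite -scaleN1r enormZ normrN normr1 mul1r. Qed.

Lemma enorm_distC x y : enorm (x - y) = enorm (y - x).
Proof. by rewrite -enormN opprB. Qed.

(* Expand |(|y|) x - (|x|) y|^2 >= 0. *)
Lemma cauchy_schwarz x y : dotv x y <= enorm x * enorm y.
Proof.
have [/eqP|xy_gt0] := eqVneq (enorm x * enorm y) 0.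
  rewrite mulf_eq0 => /orP[] /eqP /enorm_eq0 ->.
    by rewrite dotv0l enorm0 mul0r.
  by rewrite dotvC dotv0l enorm0 mulr0.
have := dotvv_ge0 (enorm y *: x - enorm x *: y).
rewrite !(dotvBl, dotvBr, dotvZl, dotvZr) (dotvC y x) -!enorm_sqr => expand_ge0.
have : 0 <= enorm x * enorm y * (enorm x * enorm y - dotv x y) by nra.
by rewrite pmulr_rge0 ?lt0r ?xy_gt0 ?mulr_ge0 ?enorm_ge0 // subr_ge0.
Qed.

Lemma ler_enormD x y : enorm (x + y) <= enorm x + enorm y.
Proof.
rewrite -(ler_pXn2r (n := 2)) // ?nnegrE ?addr_ge0 ?enorm_ge0 //.
rewrite enorm_sqr !(dotvDl, dotvDr) (dotvC y x).
have := cauchy_schwarz x y; rewrite -!enorm_sqr; nra.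
Qed.

Lemma ler_enormB x y : enorm (x - y) <= enorm x + enorm y.
Proof. by rewrite -(enormN y) ler_enormD. Qed.

Lemma lerB_enorm_dist x y : enorm x - enorm y <= enorm (x - y).
Proof. by have := ler_enormD (x - y) y; rewrite subrK; lra. Qed.

Lemma ler_enorm_dist_dist x y : `|enorm x - enorm y| <= enorm (x - y).
Proof.
by rewrite ler_norml lerB_enorm_dist lerNl opprB enorm_distC lerB_enorm_dist.
Qed.

Lemma mx_norm_le_enorm x : `|x| <= enorm x.
Proof.
rewrite [`|x|]mx_normrE; apply/bigmax_leP; split=> [|[i j] _ /=]; first exact: enorm_ge0.
rewrite (ord1 i) -sqrtr_sqr ler_wsqrtr // /dotv (bigD1 j) //= -expr2 lerDl.
by apply: sumr_ge0 => k _; rewrite -expr2 sqr_ge0.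
Qed.

Lemma enorm_le_mx_norm x : enorm x <= Num.sqrt n%:R * `|x|.
Proof.
rewrite -[`|x|]normr_id -sqrtr_sqr -sqrtrM // ler_wsqrtr //.
rewrite mulr_natl -[n in _ *+ n]card_ord -sumr_const /dotv; apply: ler_sum => i _.
rewrite -expr2 -real_normK ?num_real // lerXn2r ?nnegrE //.
by rewrite [`|x|]mx_normrE; apply/bigmax_geP; right; exists (ord0, i).
Qed.

Lemma exists_point_beyond y x r : enorm y <= r -> 0 < enorm x ->
  exists2 t, 0 < t & r < enorm (y - t *: x) <= 3 * r + 1.
Proof.
move=> yr x_gt0; have r_ge0 : 0 <= r := le_trans (enorm_ge0 y) yr.
set t := (2 * r + 1) / enorm x.
have t_gt0 : 0 < t by rewrite divr_gt0 //; lra.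
have tx : enorm (t *: x) = 2 * r + 1.
  by rewrite enormZ gtr0_norm // mulfVK ?gt_eqF.
exists t => //; apply/andP; split.
  by have := lerB_enorm_dist (t *: x) y; rewrite enorm_distC; lra.
by have := ler_enormB y (t *: x); lra.
Qed.

End EuclideanGeometry.

Section Continuity.
Context {R : realType} {n : nat}.
Implicit Types (x y : 'rV[R]_n).

Lemma near_enorm_lt x e : 0 < e -> \forall y \near x, enorm (y - x) < e.
Proof.
move=> e_gt0; have c_gt0 : 0 < Num.sqrt n%:R + 1 :> R by have := sqrtr_ge0 (n%:R : R); lra.
near=> y; apply: le_lt_trans (enorm_le_mx_norm _) _.
have : ball x (e / (Num.sqrt n%:R + 1)) y.
  by near: y; apply: (@near_ball _ _ x); rewrite divr_gt0.
rewrite -ball_normE /= distrC ltr_pdivlMr // => xy.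
by apply: le_lt_trans xy; rewrite mulrC ler_wpM2l // lerDl.
Unshelve. all: by end_near.
Qed.

Lemma continuous_enorm : continuous (@enorm R n).
Proof.
move=> x; apply/(@cvgrPdist_lt _ _ _ (nbhs x) (nbhs_filter x)) => e e_gt0.
near=> y; apply: le_lt_trans (ler_enorm_dist_dist _ _) _.
by rewrite enorm_distC; near: y; exact: near_enorm_lt.
Unshelve. all: by end_near.
Qed.

Lemma locally_lipschitz_continuous {b : 'rV[R]_n -> 'rV[R]_n} :
  locally_lipschitz b -> continuous b.
Proof.
move=> b_lip x; apply/(@cvgrPdist_lt _ _ _ (nbhs x) (nbhs_filter x)) => e e_gt0.
have [r [L [r_gt0 [L_ge0 b_lipx]]]] := b_lip x.
have L1_gt0 : 0 < L + 1 by lra.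
have eL_gt0 : 0 < e / (L + 1) by rewrite divr_gt0.
near=> y; apply: le_lt_trans (mx_norm_le_enorm _) _.
have [yr ye] : enorm (y - x) < r /\ enorm (y - x) < e / (L + 1).
  by split; near: y; exact: near_enorm_lt.
rewrite enorm_distC; apply: le_lt_trans (b_lipx y x yr _) _.
  by rewrite subrr enorm0.
rewrite ltr_pdivlMr // in ye.
by have := enorm_ge0 (y - x); nra.
Unshelve. all: by end_near.
Qed.

Lemma compact_enorm_ball r : compact [set y : 'rV[R]_n | enorm y <= r].
Proof.
apply: bounded_closed_compact.
  exists r; split; first exact: num_real.
  move=> M rM y /= yr; have := mx_norm_le_enorm y; lra.
exact: (preimage_closed (fun x _ => continuous_enorm x) (@closed_le _ r)).
Qed.

Lemma continuous_bounded_on_enorm_ball {f : 'rV[R]_n -> R} r : continuous f ->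
  exists2 M, 0 <= M & forall y, enorm y <= r -> f y <= M.
Proof.
move=> f_cont.
have [M0 [_ fM]] := compact_bounded
  (continuous_compact (continuous_subspaceT f_cont) (compact_enorm_ball r)).
have M_gt : M0 < `|M0| + 1 by have := ler_norm M0; lra.
exists (`|M0| + 1) => [|y yr]; first by rewrite addr_ge0.
exact: le_trans (ler_norm _) (fM _ M_gt (f y) (ex_intro2 _ _ y yr erefl)).
Qed.

End Continuity.

Section FarField.
Context {R : realType} {n : nat} {b : 'rV[R]_n -> 'rV[R]_n} {R0 kappa : R}.
Hypothesis kappa_gt0 : 0 < kappa.
Hypothesis b_dissipative : forall x y : 'rV[R]_n, R0 < enorm x -> R0 < enorm y ->
  dotv (b x - b y) (x - y) <= - kappa * enorm (x - y) ^+ 2.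

Lemma dissipative_beyond x y t : 0 <= t ->
  R0 < enorm x -> R0 < enorm (y - t *: (x - y)) ->
  dotv (b x - b (y - t *: (x - y))) (x - y) <= - kappa * enorm (x - y) ^+ 2.
Proof.
move=> t_ge0 Rx Rw; set d := enorm (x - y).
have xw : x - (y - t *: (x - y)) = (1 + t) *: (x - y).
  by rewrite scalerDl scale1r opprB addrCA addrC.
have := b_dissipative _ _ Rx Rw.
rewrite xw dotvZr enormZ ger0_norm ?addr_ge0 // -/d exprMn.
have t1_gt0 : 0 < 1 + t by lra.
rewrite expr2 -mulrA [- kappa * _]mulrCA ler_pM2l // => bxw.
apply: le_trans bxw _; have := mulr_ge0 (ltW kappa_gt0) (sqr_ge0 d); nra.
Qed.

Lemma dissipative_far_near x y M : R0 < enorm x -> enorm y <= R0 ->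
  (forall z, enorm z <= 3 * R0 + 1 -> enorm (b z) <= M) ->
  dotv (b x - b y) (x - y) <= - kappa * enorm (x - y) ^+ 2 + 2 * M * enorm (x - y).
Proof.
move=> Rx yR bM; set d := enorm (x - y).
have y_ball : enorm y <= 3 * R0 + 1 by have := enorm_ge0 y; lra.
have d_gt0 : 0 < d by have := lerB_enorm_dist x y; rewrite -/d; lra.
have [t t_gt0 /andP[Rw w_ball]] := exists_point_beyond y (x - y) R0 yR d_gt0.
set w := y - t *: (x - y) in Rw w_ball *.
have far_part : dotv (b x - b w) (x - y) <= - kappa * d ^+ 2 :=
  dissipative_beyond x y t (ltW t_gt0) Rx Rw.
have near_part : dotv (b w - b y) (x - y) <= 2 * M * d.
  apply: le_trans (cauchy_schwarz _ _) _; apply: ler_wpM2r; first exact: enorm_ge0.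
  by have := ler_enormB (b w) (b y); have := bM _ w_ball; have := bM _ y_ball; lra.
by rewrite -(subrK (b w) (b x)) -addrA dotvDl; lra.
Qed.

End FarField.

Theorem lemma2p9 (R : realType) (n : nat) (b : 'rV[R]_n -> 'rV[R]_n)
    (R0 kappa : R) :
  locally_lipschitz b ->
  0 <= R0 -> 0 < kappa ->
  (forall x y : 'rV[R]_n, R0 < enorm x -> R0 < enorm y ->
     dotv (b x - b y) (x - y) <= - kappa * enorm (x - y) ^+ 2) ->
  forall kbar : R, 0 < kbar -> kbar < kappa ->
  exists Rbar : R, 0 < Rbar /\
    forall x y : 'rV[R]_n, Rbar < enorm x ->
      dotv (b x - b y) (x - y) <= - kbar * enorm (x - y) ^+ 2.
Proof.
move=> b_lip R0_ge0 kappa_gt0 b_diss kbar kbar_gt0 kbar_lt.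
have b_cont := locally_lipschitz_continuous b_lip.
have [M M_ge0 bM] := continuous_bounded_on_enorm_ball (3 * R0 + 1)
  (fun x => continuous_comp (b_cont x) (continuous_enorm (b x))).
set eps := kappa - kbar; have eps_gt0 : 0 < eps by rewrite subr_gt0.
have Meps_ge0 : 0 <= 2 * M / eps by apply: divr_ge0; rewrite ?mulr_ge0 // ltW.
exists (R0 + 2 * M / eps + 1); split=> [|x y Rx]; first lra.
have d2_ge0 := sqr_ge0 (enorm (x - y)).
have [Ry|yR] := ltrP R0 (enorm y).
  have := b_diss x y ltac:(lra) Ry; have := mulr_ge0 (ltW eps_gt0) d2_ge0.
  by rewrite /eps; lra.
have := dissipative_far_near kappa_gt0 b_diss x y M ltac:(lra) yR bM.
set d := enorm (x - y) in d2_ge0 *.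
have Md : 2 * M <= eps * d.
  rewrite [eps * d]mulrC -ler_pdivrMr //.
  by have := lerB_enorm_dist x y; rewrite -/d; lra.
have : 2 * M * d <= eps * d * d by apply: ler_wpM2r => //; exact: enorm_ge0.
by rewrite /eps; lra.
Qed.
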